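(* Let $\mathfrak{n}=(V,\{\,,\})$ be a $2$-step nilpotent Lie algebra over $K$ with $Z(\mathfrak{n})\subseteq\{\mathfrak{n},\mathfrak{n}\}$, and let $x* y$ be an LR-structure on $\mathfrak{n}$ satisfying $\{\mathfrak{n},\mathfrak{n}\}*\mathfrak{n}=0$. Then the LR-structure is complete, i.e. all left multiplications $y\mapsto x*y$ are nilpotent.
   Context: $K$ is a field of characteristic zero, $V$ a finite-dimensional $K$-vector space. An LR-structure on a Lie algebra $\mathfrak{n}=(V,\{\,,\})$ is a bilinear product $x*y$ on $V$ such that for all $x,y,z\in V$: $x*y-y*x=\{x,y\}$, $x*(y*z)=y*(x*z)$, and $x*\{y,z\}=\{x*y,z\}+\{y,x*z\}$ (equivalently, $x\cdot y:=-x*y$ is a post-Lie algebra structure on the pair (abelian Lie algebra on $V$, $\mathfrak{n}$)). $Z(\mathfrak{n})$ is the center, $\{\mathfrak{n},\mathfrak{n}\}$ the derived algebra. A Lie algebra is called $2$-step nilpotent here if it is nilpotent of class at most $2$. *)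

From HB Require Import structures.
From mathcomp Require Import all_boot all_order all_algebra.
Set Implicit Arguments. Unset Strict Implicit. Unset Printing Implicit Defensive.
Import GRing.Theory.
Local Open Scope ring_scope.

Section Defs.
Variables (K : fieldType) (V : vectType K).

Definition bilinear_op (m : V -> V -> V) : Prop :=
  (forall (a : K) (x y z : V), m (a *: x + y) z = a *: m x z + m y z) /\
  (forall (a : K) (x y z : V), m x (a *: y + z) = a *: m x y + m x z).

Definition is_lie_bracket (br : V -> V -> V) : Prop :=
  [/\ bilinear_op br,
      (forall x, br x x = 0) &
      (forall x y z, br x (br y z) + br y (br z x) + br z (br x y) = 0)].

Definition two_step_nilpotent (br : V -> V -> V) : Prop :=
  forall x y z, br (br x y) z = 0.

Definition in_center (br : V -> V -> V) (z : V) : Prop :=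
  forall y, br z y = 0.

(* derived algebra {n,n}: the linear span of all brackets; by bilinearity
   this is the set of finite sums of brackets *)
Definition in_derived (br : V -> V -> V) (z : V) : Prop :=
  exists s : seq (V * V), z = \sum_(p <- s) br p.1 p.2.

Definition is_LR_structure (br mul : V -> V -> V) : Prop :=
  [/\ bilinear_op mul,
      (forall x y, mul x y - mul y x = br x y),
      (forall x y z, mul x (mul y z) = mul y (mul x z)) &
      (forall x y z, mul x (br y z) = br (mul x y) z + br y (mul x z))].

Definition derived_mul_zero (br mul : V -> V -> V) : Prop :=
  forall u v, in_derived br u -> mul u v = 0.

Definition nilpotent_map (f : V -> V) : Prop :=
  exists n : nat, forall y, iter n f y = 0.

Definition complete_LR (mul : V -> V -> V) : Prop :=
  forall x, nilpotent_map (mul x).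
End Defs.

(* Write L_x for y |-> x*y.  Since {n,n}*n = 0 and n is 2-step nilpotent, n*{n,n} = 0 as
   well, and each L_x is skew for the bracket: {x*a, c} = -{a, x*c}.  Combining this with
   x*(y*z) = y*(x*z) one finds {z, x*(x*y)} = -{z, x*(x*y)}, so in characteristic zero
   x*(x*y) is central, hence lies in {n,n}.  Then x*(x*(x*y)) = (x*(x*y))*x + {x, x*(x*y)}
   vanishes, so L_x^3 = 0. *)
From HB Require Import structures.
From mathcomp Require Import all_boot all_order all_algebra.
Import GRing.Theory.
Local Open Scope ring_scope.

Section Bilinear.
Context {K : fieldType} {V : vectType K} {m : V -> V -> V}.
Hypothesis m_bilinear : bilinear_op m.

Lemma bilinDl x y z : m (x + y) z = m x z + m y z.
Proof. by have := m_bilinear.1 1 x y z; rewrite !scale1r. Qed.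

Lemma bilinBl x y z : m (x - y) z = m x z - m y z.
Proof. by have := m_bilinear.1 (-1) y x z; rewrite !scaleN1r addrC [_ + m x z]addrC. Qed.

Lemma bilinDr x y z : m x (y + z) = m x y + m x z.
Proof. by have := m_bilinear.2 1 x y z; rewrite !scale1r. Qed.

Lemma bilinBr x y z : m x (y - z) = m x y - m x z.
Proof. by have := m_bilinear.2 (-1) x z y; rewrite !scaleN1r addrC [_ + m x y]addrC. Qed.

End Bilinear.

Lemma eq_oppr0 {K : fieldType} {V : lmodType K} (v : V) :
  2%:R != 0 :> K -> v = - v -> v = 0.
Proof.
move=> two_neq0 vN; apply/eqP.
have : (2%:R : K) *: v == 0 by rewrite scaler_nat mulr2n {1}vN addNr.
by rewrite scaler_eq0 (negPf two_neq0).
Qed.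

Section LRStructure.
Context {K : fieldType} {V : vectType K} {br mul : V -> V -> V}.
Hypotheses (br_lie : is_lie_bracket br) (br_nil2 : two_step_nilpotent br).
Hypotheses (mul_LR : is_LR_structure br mul) (mul_derived : derived_mul_zero br mul).

Let br_bilinear : bilinear_op br. Proof. by case: br_lie. Qed.
Let mul_bilinear : bilinear_op mul. Proof. by case: mul_LR. Qed.
Let mul_commutator x y : mul x y - mul y x = br x y. Proof. by case: mul_LR. Qed.
Let mul_left_comm x y z : mul x (mul y z) = mul y (mul x z). Proof. by case: mul_LR. Qed.
Let mul_derivation x y z : mul x (br y z) = br (mul x y) z + br y (mul x z).
Proof. by case: mul_LR. Qed.

Lemma lie_anticomm a b : br a b = - br b a.
Proof.
case: br_lie => _ br_alt _; apply/eqP; rewrite -addr_eq0.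
have := br_alt (a + b).
by rewrite (bilinDl br_bilinear) !(bilinDr br_bilinear) !br_alt add0r addr0 => ->.
Qed.

Lemma mul_brl a b v : mul (br a b) v = 0.
Proof. by apply: mul_derived; exists [:: (a, b)]; rewrite big_seq1. Qed.

Lemma mul_brr v a b : mul v (br a b) = 0.
Proof.
have := mul_commutator v (br a b); rewrite mul_brl subr0 => ->.
by rewrite lie_anticomm br_nil2 oppr0.
Qed.

Lemma br_mul_skew v a c : br (mul v a) c = - br a (mul v c).
Proof. by apply/eqP; rewrite -addr_eq0 -mul_derivation mul_brr. Qed.

Lemma mul_comm_br a b : mul b a = mul a b - br a b.
Proof. by rewrite -(mul_commutator a b) opprB addrC subrK. Qed.

Lemma br_mul_swap a b e : br a (mul b e) = br b (mul a e).
Proof.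
rewrite -[br a _]opprK -br_mul_skew mul_comm_br (bilinBl br_bilinear) br_nil2.
by rewrite subr0 br_mul_skew opprK.
Qed.

Lemma mul_mul_swap b c d : mul b (mul c d) = mul b (mul d c).
Proof. by rewrite (mul_comm_br d c) (bilinBr mul_bilinear) mul_brr subr0. Qed.

Lemma br_mul_mul_opp x y z :
  br z (mul x (mul x y)) = - br z (mul x (mul x y)).
Proof.
have cycle : br z (mul x (mul x y)) = - br y (mul x (mul x z)).
  by rewrite -br_mul_skew lie_anticomm br_mul_skew opprK.
rewrite {1}cycle (br_mul_swap y x) (mul_left_comm y x z) (mul_mul_swap x y z).
by rewrite (mul_left_comm x z y) (br_mul_swap x z).
Qed.

Lemma mul_mul_center x y :
  2%:R != 0 :> K -> in_center br (mul x (mul x y)).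
Proof.
move=> two_neq0 z; rewrite lie_anticomm.
by rewrite (eq_oppr0 _ two_neq0 (br_mul_mul_opp x y z)) oppr0.
Qed.

Lemma mulr_central_derived x u :
  in_center br u -> in_derived br u -> mul x u = 0.
Proof.
move=> u_center u_derived.
have := mul_commutator x u; rewrite (mul_derived _ x u_derived) subr0 => ->.
by rewrite lie_anticomm u_center oppr0.
Qed.

End LRStructure.

Theorem corollary4p9 (K : fieldType) (V : vectType K)
  (br mul : V -> V -> V) :
  [pchar K] =i pred0 ->
  is_lie_bracket br ->
  two_step_nilpotent br ->
  (forall z, in_center br z -> in_derived br z) ->
  is_LR_structure br mul ->
  derived_mul_zero br mul ->
  complete_LR mul.
Proof.
move=> char0 br_lie br_nil2 center_derived mul_LR mul_derived x.
have two_neq0 : 2%:R != 0 :> K by move/pcharf0P: char0 => ->.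
exists 3%N => y /=.
have u_center := mul_mul_center br_lie br_nil2 mul_LR mul_derived x y two_neq0.
apply: (mulr_central_derived br_lie mul_LR mul_derived x _ u_center).
exact: center_derived.
Qed.
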